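(* Let $\Sigma_2=\{a,b\}$ and $\Sigma_1=\{c\}$. Then: (1) there exists an embedding from $\mathrm{sg}(\Sigma_1)\times\mathrm{sg}(\Sigma_1)$ into $\mathrm{UT}(2,\mathbb{N})$; (2) there exists an embedding from $\mathrm{fg}(\Sigma_2)\times\mathrm{fg}(\Sigma_1)$ into $\mathbb{Q}^{2\times2}$; (3) there exists an embedding from $\mathrm{sg}(\Sigma_2)\times\mathrm{fg}(\Sigma_1)$ into $\mathbb{Z}^{3\times3}$; (4) there exists an embedding from $\mathrm{fg}(\Sigma_2)\times\mathrm{sg}(\Sigma_1)$ into $\mathbb{Z}^{2\times2}$.
   Context: For an alphabet $\Sigma$, $\mathrm{sg}(\Sigma)$ is the free monoid of finite words over $\Sigma$ (including the empty word $\varepsilon$) under concatenation, and $\mathrm{fg}(\Sigma)$ is the free group on $\Sigma$ (reduced words over $\Sigma\cup\Sigma^{-1}$). Products such as $\mathrm{sg}(\Sigma_2)\times\mathrm{fg}(\Sigma_1)$ carry componentwise multiplication. For $\mathbb{K}\in\{\mathbb{N},\mathbb{Z},\mathbb{Q}\}$, $\mathbb{K}^{n\times n}$ is the multiplicative semigroup of $n\times n$ matrices with entries in $\mathbb{K}$, and $\mathrm{UT}(2,\mathbb{N})$ is the semigroup of $2\times2$ upper triangular matrices with entries in $\mathbb{N}$. An embedding is a map $\varphi$ with $\varphi(uv)=\varphi(u)\varphi(v)$ for all $u,v$ that is injective. *)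

From HB Require Import structures.
From mathcomp Require Import all_boot all_order all_algebra.
Set Implicit Arguments. Unset Strict Implicit. Unset Printing Implicit Defensive.
Import GRing.Theory.
Local Open Scope ring_scope.

Inductive Sigma2 := sa | sb.
Inductive Sigma1 := sc.

Definition Sigma2_eqb (x y : Sigma2) : bool :=
  match x, y with sa, sa | sb, sb => true | _, _ => false end.
Lemma Sigma2_eqP : Equality.axiom Sigma2_eqb.
Proof. by case; case; constructor. Qed.
HB.instance Definition _ := hasDecEq.Build Sigma2 Sigma2_eqP.

Definition Sigma1_eqb (x y : Sigma1) : bool := true.
Lemma Sigma1_eqP : Equality.axiom Sigma1_eqb.
Proof. by case; case; constructor. Qed.
HB.instance Definition _ := hasDecEq.Build Sigma1 Sigma1_eqP.

Definition sg (S : Type) := seq S.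
Definition sg_valid (S : Type) (w : sg S) : Prop := True.
Definition sg_mul (S : Type) (u v : sg S) : sg S := u ++ v.

(** Free group fg(S): words over S ∪ S^{-1}, a letter being (x, e) with
    e = true meaning x^{-1}.  Elements are the reduced words; the product
    is free reduction of the concatenation. *)
Definition fg (S : eqType) := seq (S * bool).

Definition fg_push (S : eqType) (l : S * bool) (w : fg S) : fg S :=
  match w with
  | l' :: w' => if (l'.1 == l.1) && (l'.2 != l.2) then w' else l :: w
  | [::] => [:: l]
  end.

Definition fg_reduce (S : eqType) (w : fg S) : fg S := foldr (@fg_push S) [::] w.

Fixpoint fg_reduced (S : eqType) (w : fg S) : bool :=
  match w with
  | l :: ((l' :: _) as w') =>
      ~~ ((l.1 == l'.1) && (l.2 != l'.2)) && fg_reduced w'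
  | _ => true
  end.

Definition fg_valid (S : eqType) (w : fg S) : Prop := fg_reduced w.
Definition fg_mul (S : eqType) (u v : fg S) : fg S := fg_reduce (u ++ v).

Definition prod_valid (A B : Type) (vA : A -> Prop) (vB : B -> Prop)
  (x : A * B) : Prop := vA x.1 /\ vB x.2.
Definition prod_mul (A B : Type) (mA : A -> A -> A) (mB : B -> B -> B)
  (x y : A * B) : A * B := (mA x.1 y.1, mB x.2 y.2).

Definition is_embedding (A M : Type) (vA : A -> Prop) (mA : A -> A -> A)
  (inM : M -> Prop) (mM : M -> M -> M) (phi : A -> M) : Prop :=
  [/\ (forall u, vA u -> inM (phi u)),
      (forall u v, vA u -> vA v -> phi (mA u v) = mM (phi u) (phi v))
    & (forall u v, vA u -> vA v -> phi u = phi v -> u = v)].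

Definition is_UT2 (A : 'M[nat]_2) : Prop := A 1 0 = 0%N.

Definition mxmul (R : pzSemiRingType) (n : nat) (A B : 'M[R]_n) : 'M[R]_n := A *m B.

(* The free monoid on one letter is N (word length) and the free group on one
   letter is Z (exponent sum).  The free group on {a, b} embeds in SL(2, Z) by
   Sanov's representation a |-> [[1, 2], [0, 1]], b |-> [[1, 0], [2, 1]], which
   is faithful by a ping-pong argument on the columns of the image matrices.
   Multiplying by a positive scalar 2^k adds a commuting factor N or Z, and k is
   recovered from the determinant 2^(2k); this gives (2) over Q and (4) over Z.
   For (3), a word w over {a, b} acts on the line as x |-> 3^|w| x + code w,
   where code w reads w as a base-3 numeral with nonzero digits; this affine
   block is glued to a unipotent block carrying the exponent sum.  (1) is the
   diagonal map (u, v) |-> diag(2^|u|, 3^|v|). *)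

From mathcomp Require Import all_boot all_order all_algebra zify.
Set Implicit Arguments. Unset Strict Implicit. Unset Printing Implicit Defensive.
Import Order.TTheory GRing.Theory Num.Theory.
Local Open Scope ring_scope.

Definition mx22 (R : Type) (a b c d : R) : 'M[R]_2 :=
  \matrix_(i, j) if i == ord0 then (if j == ord0 then a else b)
                 else (if j == ord0 then c else d).

Lemma mx22_eta (R : Type) (A : 'M[R]_2) : A = mx22 (A 0 0) (A 0 1) (A 1 0) (A 1 1).
Proof.
apply/matrixP => -[[|[|//]] ?] [[|[|//]] ?].
all: by rewrite mxE /=; congr (A _ _); apply/val_inj.
Qed.

Lemma mulmx22 (R : pzSemiRingType) (a b c d a' b' c' d' : R) :
  mx22 a b c d *m mx22 a' b' c' d' =
  mx22 (a * a' + b * c') (a * b' + b * d') (c * a' + d * c') (c * b' + d * d').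
Proof.
apply/matrixP => -[[|[|//]] ?] [[|[|//]] ?].
all: by rewrite !mxE !big_ord_recr big_ord0 /= !mxE add0r.
Qed.

Lemma mx22_1 (R : pzSemiRingType) : 1 = mx22 1 0 0 (1 : R).
Proof. by apply/matrixP => -[[|[|//]] ?] [[|[|//]] ?]; rewrite !mxE. Qed.

Lemma det_mx22 (R : comPzRingType) (a b c d : R) : \det (mx22 a b c d) = a * d - b * c.
Proof.
rewrite (expand_det_row _ 0) !big_ord_recr big_ord0 /= /cofactor !det_mx11 !mxE /=.
by rewrite add0r expr0 expr1 !mul1r mulN1r mulrN.
Qed.

Lemma fg_reduced_behead (S : eqType) (l : S * bool) w :
  fg_reduced (l :: w) -> fg_reduced w.
Proof. by case: w => //= l' w /andP []. Qed.

Section FreeGroupEval.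
Variables (S : eqType) (T : Type) (idx : T) (op : Monoid.law idx).
Variable f : S * bool -> T.
Hypothesis fK : forall s e, op (f (s, e)) (f (s, ~~ e)) = idx.

Definition fg_eval (w : fg S) : T := \big[op/idx]_(l <- w) f l.

Lemma fg_eval_cons l w : fg_eval (l :: w) = op (f l) (fg_eval w).
Proof. exact: big_cons. Qed.

Lemma fg_eval_push l w : fg_eval (fg_push l w) = op (f l) (fg_eval w).
Proof.
case: w => [|[s' e'] w] /=; first by rewrite /fg_eval big_seq1 big_nil Monoid.mulm1.
case: ifP => [/andP [/eqP /= -> /negPf ne]|_]; last exact: fg_eval_cons.
case: l ne => s e /= ne; have -> : e' = ~~ e by case: e e' ne => [] [].
(* the change of the right-hand side aligns the coercion of op with that in fK *)
by rewrite fg_eval_cons Monoid.mulmA -[RHS]/(op (op _ _) _) fK Monoid.mul1m.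
Qed.

Lemma fg_eval_mul u v : fg_eval (fg_mul u v) = op (fg_eval u) (fg_eval v).
Proof.
have reduceK w : fg_eval (fg_reduce w) = fg_eval w.
  by elim: w => [|l w IH] //=; rewrite fg_eval_push IH fg_eval_cons.
by rewrite /fg_mul reduceK /fg_eval big_cat.
Qed.

End FreeGroupEval.

Definition sanov_gen (l : Sigma2 * bool) : 'M[int]_2 :=
  let t := if l.2 then -2 else 2 in
  if l.1 is sa then mx22 1 t 0 1 else mx22 1 0 t 1.

Lemma sanov_genK s e : sanov_gen (s, e) * sanov_gen (s, ~~ e) = 1.
Proof. by rewrite mx22_1 -mulmxE; case: s; case: e; rewrite /= mulmx22; congr mx22. Qed.

Lemma sanov_genVK s e : sanov_gen (s, ~~ e) * sanov_gen (s, e) = 1.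
Proof. by rewrite -{2}[e]negbK sanov_genK. Qed.

Definition sign_is (e : bool) (x : int) : Prop := if e then x < 0 else 0 < x.

(* Left multiplication by a
   letter not cancelling l carries it to the invariant of that letter, and no
   matrix of determinant 1 satisfies two of these invariants. *)
Definition ping (l : Sigma2 * bool) (M : 'M[int]_2) : Prop :=
  let: (a, b, c, d) := (M 0 0, M 0 1, M 1 0, M 1 1) in
  if l.1 is sa then
    (c * c <= d * d /\ d * d < b * b /\ sign_is l.2 (b * d)) \/
    (d * d <= c * c /\ c * c < a * a /\ sign_is l.2 (a * c))
  else
    (a * a <= b * b /\ b * b < d * d /\ sign_is l.2 (b * d)) \/
    (b * b <= a * a /\ a * a < c * c /\ sign_is l.2 (a * c)).

Lemma ping_gen l : ping l (sanov_gen l).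
Proof. by case: l => [[] []]; rewrite /ping /sign_is !mxE /=; lia. Qed.

Lemma ping_mul l l' M : fg_reduced [:: l; l'] -> ping l' M -> ping l (sanov_gen l * M).
Proof.
rewrite [M]mx22_eta -mulmxE; move: (M 0 0) (M 0 1) (M 1 0) (M 1 1) => a b c d.
case: l l' => [[] e] [[] e'].
all: rewrite mulmx22 /ping /sign_is !mxE /=.
all: case: e; case: e' => //= _.
all: have [] : c * c <= d * d \/ d * d <= c * c by lia.
all: have [] : a * a <= b * b \/ b * b <= a * a by lia.
all: nia.
Qed.

Lemma ping_neq1 l : ~ ping l 1.
Proof. by case: l => [[] []]; rewrite /ping /sign_is !mxE /=; lia. Qed.

Lemma ping_det1_uniq l l' M : \det M = 1 -> ping l M -> ping l' M -> l = l'.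
Proof.
rewrite [M]mx22_eta det_mx22 /ping /sign_is !mxE /=.
move: (M 0 0) (M 0 1) (M 1 0) (M 1 1) => a b c d.
by case: l l' => [[] []] [[] []] //=; nia.
Qed.

Definition sanov : fg Sigma2 -> 'M[int]_2 := fg_eval *%R sanov_gen.

Lemma sanov_nil : sanov [::] = 1.
Proof. exact: big_nil. Qed.

Lemma sanov_cons l w : sanov (l :: w) = sanov_gen l * sanov w.
Proof. exact: big_cons. Qed.

Lemma sanov_mul u v : sanov (fg_mul u v) = sanov u * sanov v.
Proof. by apply: fg_eval_mul; apply: sanov_genK. Qed.

Lemma det_sanov w : \det (sanov w) = 1.
Proof.
elim: w => [|l w IH]; first by rewrite sanov_nil det1.
rewrite sanov_cons -mulmxE det_mulmx IH mulr1.
by case: l => [[] []]; rewrite det_mx22.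
Qed.

Lemma ping_sanov l w : fg_reduced (l :: w) -> ping l (sanov (l :: w)).
Proof.
elim: w l => [|l' w IH] l /=.
  by rewrite sanov_cons sanov_nil mulr1 => _; exact: ping_gen.
move=> /andP [ll' /IH pw]; rewrite sanov_cons; apply: ping_mul pw.
by rewrite /= ll'.
Qed.

Lemma sanov_inj u v : fg_reduced u -> fg_reduced v -> sanov u = sanov v -> u = v.
Proof.
elim: u v => [|l u IH] [|l' v] //.
- by move=> _ /ping_sanov + e; rewrite -e sanov_nil => /ping_neq1.
- by move=> /ping_sanov + _ e; rewrite e sanov_nil => /ping_neq1.
move=> ru rv e.
have ll' : l = l'.
  apply: (ping_det1_uniq (det_sanov (l :: u)) (ping_sanov ru)).
  by rewrite e; apply: ping_sanov.
subst l'; congr (_ :: _); apply: IH.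
- exact: fg_reduced_behead ru.
- exact: fg_reduced_behead rv.
case: l {ru rv} e => s b; rewrite !sanov_cons.
move=> /(congr1 (GRing.mul (sanov_gen (s, ~~ b)))).
by rewrite !mulrA sanov_genVK !mul1r.
Qed.

Lemma sanov_embedding :
  is_embedding (@fg_valid Sigma2) (@fg_mul Sigma2) (fun M => \det M = 1) (@mxmul _ 2) sanov.
Proof.
by split=> [u _|u v _ _|]; [exact: det_sanov | exact: sanov_mul | exact: sanov_inj].
Qed.

Lemma map_mx_injective (R S : Type) (f : R -> S) m n :
  injective f -> injective (@map_mx R S f m n).
Proof.
move=> f_inj A B /matrixP eAB; apply/matrixP => i j.
by have := eAB i j; rewrite !mxE => /f_inj.
Qed.

Lemma map_mx_det1_embedding (A : Type) (vA : A -> Prop) (mA : A -> A -> A)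
    (R S : comNzRingType) (f : {rmorphism R -> S}) n (g : A -> 'M[R]_n.+1) :
  injective f ->
  is_embedding vA mA (fun M => \det M = 1) (@mxmul R n.+1) g ->
  is_embedding vA mA (fun M => \det M = 1) (@mxmul S n.+1) (fun u => map_mx f (g u)).
Proof.
move=> f_inj [g_det gM g_inj]; split=> [u vu|u v vu vv|u v vu vv].
- by rewrite det_map_mx g_det ?rmorph1.
- by rewrite /mxmul gM // map_mxM.
- by move/(map_mx_injective f_inj)/g_inj; apply.
Qed.

Lemma scale_det1_embedding (R : numDomainType) n (A B : Type)
    (vA : A -> Prop) (mA : A -> A -> A) (vB : B -> Prop) (mB : B -> B -> B)
    (g : A -> 'M[R]_n.+1) (f : B -> R) :
  is_embedding vA mA (fun M => \det M = 1) (@mxmul R n.+1) g ->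
  is_embedding vB mB (fun c => 0 < c) *%R f ->
  is_embedding (prod_valid vA vB) (prod_mul mA mB) (fun _ => True) (@mxmul R n.+1)
    (fun x => f x.2 *: g x.1).
Proof.
move=> [g_det gM g_inj] [f_pos fM f_inj].
split=> // [[u b] [v c] [/= vu vb] [/= vv vc]|[u b] [v c] [/= vu vb] [/= vv vc]].
  by rewrite /mxmul /prod_mul /= gM // fM // -scalemxAl -scalemxAr scalerA.
move=> e; have fb := f_pos b vb; have fc := f_pos c vc.
have fbc : f b = f c.
  move/(congr1 determinant): e; rewrite !detZ !g_det // !mulr1 => /eqP.
  by rewrite (eqrXn2 (ltn0Sn n) (ltW fb) (ltW fc)) => /eqP.
rewrite fbc in e; move/(scalemx_inj (lt0r_neq0 fc)): e => e.
by rewrite (g_inj u v vu vv e) (f_inj b c vb vc fbc).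
Qed.

Definition esum (S : eqType) : fg S -> int := fg_eval +%R (fun l => if l.2 then -1 else 1).

Lemma esum_mul (S : eqType) (u v : fg S) : esum (fg_mul u v) = esum u + esum v.
Proof. by apply: fg_eval_mul => s []. Qed.

Lemma esum_nseq (S : eqType) (l : S * bool) k :
  esum (nseq k l) = if l.2 then - k%:Z else k%:Z.
Proof.
elim: k => [|k IH]; first by rewrite /esum /fg_eval big_nil; case: ifP.
rewrite /esum /fg_eval big_cons -/(fg_eval _ _ _) -/(esum _) IH.
by case: ifP => _ /=; lia.
Qed.

Lemma fg1_reduced_nseq (w : fg Sigma1) :
  fg_reduced w -> exists e, w = nseq (size w) (sc, e).
Proof.
elim: w => [|[[] e] w IH] /=; first by exists false.
case: w IH => [|[[] e'] w] IH /=; first by exists e.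
move=> /andP [ee' /IH [e0 /= [<- ew]]] {IH}; exists e.
have <- : e' = e by case: e e' ee' {ew} => [] [].
by rewrite {1}ew.
Qed.

Lemma esum_fg1_inj (u v : fg Sigma1) :
  fg_reduced u -> fg_reduced v -> esum u = esum v -> u = v.
Proof.
move=> /fg1_reduced_nseq [e ->] /fg1_reduced_nseq [e' ->]; rewrite !esum_nseq /=.
move: (size u) (size v) => m n.
case: e e' => [] [] /= e.
- by have -> : m = n by lia.
- by have [-> ->] : m = 0%N /\ n = 0%N by lia.
- by have [-> ->] : m = 0%N /\ n = 0%N by lia.
- by have -> : m = n by lia.
Qed.

Lemma pow2_esum_embedding :
  is_embedding (@fg_valid Sigma1) (@fg_mul Sigma1) (fun c : rat => 0 < c) *%R
    (fun z => 2 ^ esum z).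
Proof.
split=> [z _|u v _ _|u v vu vv].
- exact: exprz_gt0.
- by rewrite esum_mul expfzDr.
- by move/ieexprIz => /(_ isT isT); apply: esum_fg1_inj.
Qed.

Lemma sg1_nseq (u : sg Sigma1) : u = nseq (size u) sc.
Proof. by elim: u => //= -[] u {1}->. Qed.

Lemma sg1_size_inj : injective (@size Sigma1).
Proof. by move=> u v e; rewrite (sg1_nseq u) (sg1_nseq v) e. Qed.

Lemma pow2_size_embedding :
  is_embedding (@sg_valid Sigma1) (@sg_mul Sigma1) (fun c : int => 0 < c) *%R
    (fun v => 2 ^+ size v).
Proof.
split=> [v _|u v _ _|u v _ _].
- exact: exprn_gt0.
- by rewrite /sg_mul size_cat exprD.
- by move/ieexprIn => /(_ isT isT)/sg1_size_inj.
Qed.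

Lemma diag_pow_embedding :
  is_embedding (prod_valid (@sg_valid Sigma1) (@sg_valid Sigma1))
    (prod_mul (@sg_mul Sigma1) (@sg_mul Sigma1)) is_UT2 (@mxmul _ 2)
    (fun x => mx22 (2 ^ size x.1) 0 0 (3 ^ size x.2))%N.
Proof.
split=> [x _|[u v] [u' v'] _ _|[u v] [u' v'] _ _].
- by rewrite /is_UT2 mxE.
- by rewrite /mxmul mulmx22 /= !size_cat !expnD !(mulr0, mul0r, addr0, add0r).
move/matrixP => e; have := e 0 0; have := e 1 1; rewrite !mxE /=.
by move=> /expnI-/(_ isT)/sg1_size_inj-> /expnI-/(_ isT)/sg1_size_inj->.
Qed.

Definition digit3 (s : Sigma2) : nat := if s is sa then 1 else 2.

Definition code3 (w : sg Sigma2) : nat := foldr (fun s n => digit3 s + 3 * n)%N 0%N w.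

Lemma code3_cat u v : code3 (u ++ v) = (code3 u + 3 ^ size u * code3 v)%N.
Proof. by elim: u => /= [|s u ->]; rewrite ?expn0 ?mul1n // expnS; lia. Qed.

Lemma code3_inj : injective code3.
Proof.
elim=> [|s u IH] [|s' v] //=; rewrite /digit3.
- by case: s'; lia.
- by case: s; lia.
move=> e; have ss' : s = s' by case: s s' e => [] [] //=; lia.
by subst s'; congr (_ :: _); apply: IH; case: s e => /=; lia.
Qed.

(* The affine map x |-> a x + v and the translation by n, sharing the middle
   coordinate. *)
Definition mx3 (a v n : int) : 'M[int]_3 :=
  \matrix_(i, j)
    match i : nat, j : nat with
    | 0, 0 => a | 0, 1 => v | 1, 1 => 1 | 2, 1 => n | 2, 2 => 1 | _, _ => 0
    end%N.

Lemma mulmx3 a v n a' v' n' : mx3 a v n *m mx3 a' v' n' = mx3 (a * a') (v + a * v') (n + n').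
Proof.
apply/matrixP => -[[|[|[|//]]] ?] [[|[|[|//]]] ?].
all: rewrite !mxE !big_ord_recr big_ord0 /= !mxE /=.
all: by rewrite ?(mul0r, mulr0, mul1r, mulr1, add0r, addr0) // addrC.
Qed.

Lemma mx3_embedding :
  is_embedding (prod_valid (@sg_valid Sigma2) (@fg_valid Sigma1))
    (prod_mul (@sg_mul Sigma2) (@fg_mul Sigma1)) (fun _ => True) (@mxmul _ 3)
    (fun x => mx3 (3 ^ size x.1)%N (code3 x.1) (esum x.2)).
Proof.
split=> // [[u z] [u' z'] _ _|[u z] [u' z'] [/= _ vz] [/= _ vz'] /matrixP e].
  by rewrite /mxmul mulmx3 /= size_cat expnD code3_cat esum_mul PoszD !PoszM.
have := e 0 1; have := e 2 1; rewrite !mxE /=.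
by move=> /(esum_fg1_inj vz vz') -> [/code3_inj ->].
Qed.

Theorem proposition5 :
  (* (1) sg(S1) x sg(S1) embeds into UT(2, N) *)
  (exists phi : sg Sigma1 * sg Sigma1 -> 'M[nat]_2,
      is_embedding (prod_valid (@sg_valid Sigma1) (@sg_valid Sigma1))
                   (prod_mul (@sg_mul Sigma1) (@sg_mul Sigma1))
                   is_UT2 (@mxmul _ 2) phi) /\
  (* (2) fg(S2) x fg(S1) embeds into Q^{2x2} *)
  (exists phi : fg Sigma2 * fg Sigma1 -> 'M[rat]_2,
      is_embedding (prod_valid (@fg_valid Sigma2) (@fg_valid Sigma1))
                   (prod_mul (@fg_mul Sigma2) (@fg_mul Sigma1))
                   (fun _ => True) (@mxmul _ 2) phi) /\
  (* (3) sg(S2) x fg(S1) embeds into Z^{3x3} *)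
  (exists phi : sg Sigma2 * fg Sigma1 -> 'M[int]_3,
      is_embedding (prod_valid (@sg_valid Sigma2) (@fg_valid Sigma1))
                   (prod_mul (@sg_mul Sigma2) (@fg_mul Sigma1))
                   (fun _ => True) (@mxmul _ 3) phi) /\
  (* (4) fg(S2) x sg(S1) embeds into Z^{2x2} *)
  (exists phi : fg Sigma2 * sg Sigma1 -> 'M[int]_2,
      is_embedding (prod_valid (@fg_valid Sigma2) (@sg_valid Sigma1))
                   (prod_mul (@fg_mul Sigma2) (@sg_mul Sigma1))
                   (fun _ => True) (@mxmul _ 2) phi).
Proof.
split; [|split; [|split]].
- by eexists; apply: diag_pow_embedding.
- exists (fun x => 2 ^ esum x.2 *: map_mx intr (sanov x.1)).
  exact: scale_det1_embedding (map_mx_det1_embedding (@intr_inj rat) sanov_embedding)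
    pow2_esum_embedding.
- by eexists; apply: mx3_embedding.
- exists (fun x => 2 ^+ size x.2 *: sanov x.1).
  exact: scale_det1_embedding sanov_embedding pow2_size_embedding.
Qed.
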